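(* There exists an infinite strictly increasing sequence of square-primes $A_1<A_2<A_3<\cdots$ such that the P-G triangle generated by $\mathfrak u=(A_1,A_2,A_3,\dots)$ has left edge $(b_0,b_1,b_2,\dots)$ satisfying $b_j=1$ for every odd index $j\ge 1$ (that is, every other element of the left edge, starting with the second one, equals $1$).
   Context: A square-prime (SP-number) is a positive integer of the form $k^2p$ with $k\ge 2$ an integer and $p$ a prime. For a finite or infinite sequence $\mathfrak u=(a_0,a_1,\dots)$ of non-negative integers, the P-G triangle generated by $\mathfrak u$ consists of the numbers $d_k^{(j)}$ defined by $d_k^{(0)}=a_k$ and $d_k^{(j+1)}=|d_{k+1}^{(j)}-d_k^{(j)}|$ for $j,k\ge 0$ (for a finite sequence $(a_0,\dots,a_{N-1})$ these are defined for $0\le k\le N-1-j$). Its left (western) edge is the sequence $b_j=d_0^{(j)}$, $j\ge 0$ (so $b_0=a_0$). *)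

From mathcomp Require Import all_boot.

Definition square_prime (n : nat) : Prop :=
  exists k p : nat, 2 <= k /\ prime p /\ n = k ^ 2 * p.

Definition absdiff (x y : nat) : nat := (x - y) + (y - x).

Fixpoint pg (a : nat -> nat) (j : nat) : nat -> nat :=
  match j with
  | 0 => a
  | j'.+1 => fun k => absdiff (pg a j' k.+1) (pg a j' k)
  end.

Definition left_edge (a : nat -> nat) (j : nat) : nat := pg a j 0.

From mathcomp Require Import all_boot zify.

(* Take any sequence x_0, x_1, ... growing fast enough, namely
   (m + 4) x_m + 2^(m+2) <= x_(m+1), and interleave it with shifted copies:
   A_(2m) = x_m and A_(2m+1) = x_m + 2^m.  Row 1 of the P-G triangle is then
   2^0, Y_0(0), 2^1, Y_0(1), ... with Y_0(m) = x_(m+1) - x_m - 2^m, and an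
   induction shows that every odd row 2i+1 has the same shape: 2^m at position
   2m and a fast-growing gap Y_i(m) at position 2m+1: two further difference steps
   reproduce the powers of two and replace Y_i by its own difference sequence.
   Hence the left edge is 2^0 = 1 in every odd row.
   It remains to make all A_n square-primes: for every m and every bound L we
   need x >= L with x and x + 2^m both square-primes.  Writing 2^m = c^2 2^e
   with e in {0,1}, it suffices to take x = 2^m s where 2^e s and 2^e (s + 1)
   are square-primes; such s exist, as large as desired, from the Pell-type
   equations u^2 = 6 w^2 + 1 (s = 6 w^2, e = 1) and 3 b^2 = 2 a^2 + 1
   (s = 2 a^2, e = 0). *)

Lemma square_prime_mulsq c n :
  0 < c -> square_prime n -> square_prime (c ^ 2 * n).
Proof.
move=> c_gt0 [k [p [k_ge2 [p_prime ->]]]].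
exists (c * k), p; split; [nia | split=> //].
by rewrite expnMn mulnA.
Qed.

(* Solutions of u^2 = 6 w^2 + 1, obtained from (5, 2) by repeated
   multiplication by the fundamental unit 5 + 2 sqrt 6; w grows with n. *)
Definition pell6 (n : nat) : nat * nat :=
  iter n (fun p => (5 * p.1 + 12 * p.2, 2 * p.1 + 5 * p.2)) (5, 2).

Lemma pell6_spec n : (pell6 n).1 ^ 2 = 6 * (pell6 n).2 ^ 2 + 1 /\ n.+2 <= (pell6 n).2.
Proof.
elim: n => [|n]; first by [].
rewrite /pell6 iterS -/(pell6 n) /=.
case: (pell6 n) => u w /= [Hpell Hw]; split; nia.
Qed.

(* Solutions of 3 b^2 = 2 a^2 + 1, obtained from (11, 9) by the same unit;
   a grows with n while b stays >= 2. *)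
Definition pell32 (n : nat) : nat * nat :=
  iter n (fun p => (5 * p.1 + 6 * p.2, 4 * p.1 + 5 * p.2)) (11, 9).

Lemma pell32_spec n :
  3 * (pell32 n).2 ^ 2 = 2 * (pell32 n).1 ^ 2 + 1 /\ n.+2 <= (pell32 n).1 /\ 2 <= (pell32 n).2.
Proof.
elim: n => [|n]; first by [].
rewrite /pell32 iterS -/(pell32 n) /=.
case: (pell32 n) => a b /= [Hpell [Ha Hb]]; split; nia.
Qed.

(* A seed s >= L such that 2^e s and 2^e (s + 1) are square-primes, where
   e = odd m is the parity of the exponent to be absorbed later. *)
Definition seed (m L : nat) : nat :=
  if odd m then 6 * (pell6 L).2 ^ 2 else 2 * (pell32 L).1 ^ 2.

Lemma seed_spec m L :
  L <= seed m L /\ square_prime (2 ^ odd m * seed m L)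
               /\ square_prime (2 ^ odd m * (seed m L + 1)).
Proof.
rewrite /seed; case: (odd m) => /=.
- have [Hpell Hw] := pell6_spec L.
  split; [nia | split].
  + by exists (2 * (pell6 L).2), 3; split; [nia | split=> //; nia].
  + by exists (pell6 L).1, 2; split; [nia | split=> //; nia].
- have [Hpell [Ha Hb]] := pell32_spec L.
  split; [nia | split].
  + by exists (pell32 L).1, 2; split; [nia | split=> //; nia].
  + by exists (pell32 L).2, 3; split; [nia | split=> //; nia].
Qed.

Definition sp_base (m L : nat) : nat := 2 ^ m * seed m L.

Lemma sp_base_spec m L :
  L <= sp_base m L /\ square_prime (sp_base m L)
                   /\ square_prime (sp_base m L + 2 ^ m).
Proof.
have [HL [Hs Hs1]] := seed_spec m L.
have split_pow : 2 ^ m = (2 ^ m./2) ^ 2 * 2 ^ odd m.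
  by rewrite -{1}(odd_double_half m) expnD -addnn expnD mulnn mulnC.
have pos : 0 < 2 ^ m./2 by rewrite expn_gt0.
rewrite /sp_base; split; [|split].
- by rewrite split_pow; nia.
- by rewrite split_pow -mulnA; apply: square_prime_mulsq.
- rewrite -{2}(muln1 (2 ^ m)) -mulnDr split_pow -mulnA.
  exact: square_prime_mulsq.
Qed.

Lemma pgS a j k : pg a j.+1 k = absdiff (pg a j k.+1) (pg a j k).
Proof. by []. Qed.

Lemma absdiff_ge m n : n <= m -> absdiff m n = m - n.
Proof. by rewrite /absdiff; lia. Qed.

Lemma absdiff_le m n : m <= n -> absdiff m n = n - m.
Proof. by rewrite /absdiff; lia. Qed.

Section Interleave.

(* A fast-growing sequence; the growth factor must increase with m so that
   it survives the repeated differencing of the gaps. *)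
Variable x : nat -> nat.
Hypothesis x_growth : forall m, (m + 4) * x m + 2 ^ m.+2 <= x m.+1.

Definition interleave (n : nat) : nat :=
  if odd n then x n./2 + 2 ^ n./2 else x n./2.

Lemma interleave_even m : interleave m.*2 = x m.
Proof. by rewrite /interleave odd_double doubleK. Qed.

Lemma interleave_odd m : interleave m.*2.+1 = x m + 2 ^ m.
Proof. by rewrite /interleave /= odd_double /= uphalf_double. Qed.

Lemma interleave_incr n : interleave n < interleave n.+1.
Proof.
rewrite -(odd_double_half n); case: (odd n); rewrite ?add1n ?add0n.
- rewrite -doubleS interleave_even interleave_odd.
  by have := x_growth n./2; rewrite !expnS; nia.
- by rewrite interleave_odd interleave_even; have := expn_gt0 2 n./2; lia.
Qed.

Fixpoint gap (i m : nat) : nat :=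
  if i is i'.+1 then gap i' m.+1 - gap i' m else x m.+1 - x m - 2 ^ m.

Lemma gap_spec i m : 2 ^ m.+1 <= gap i m /\ (m + 3) * gap i m <= gap i m.+1.
Proof.
elim: i m => [|i IH] m /=.
- have := x_growth m; have := x_growth m.+1; rewrite !expnS; nia.
- have [lo_m gr_m] := IH m; have [lo_m1 gr_m1] := IH m.+1.
  move: lo_m lo_m1; rewrite !expnS; nia.
Qed.

Lemma odd_row i m :
  pg interleave i.*2.+1 m.*2 = 2 ^ m /\ pg interleave i.*2.+1 m.*2.+1 = gap i m.
Proof.
elim: i m => [|i IH] m.
- rewrite !pgS /= interleave_odd interleave_even -doubleS interleave_even.
  have := x_growth m; rewrite !expnS => growth.
  by rewrite !absdiff_ge; [split; lia | lia | lia].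
- have [e_m o_m] := IH m; have [e_m1 o_m1] := IH m.+1.
  rewrite doubleS in e_m1 o_m1.
  have [lo_m gr_m] := gap_spec i m.
  have pow_double : 2 ^ m.+1 = 2 * 2 ^ m by rewrite expnS.
  have pow_pos : 0 < 2 ^ m by rewrite expn_gt0.
  have gap_incr : gap i m <= gap i m.+1 by apply: leq_trans gr_m; nia.
  rewrite doubleS !(pgS _ i.*2.+2) !(pgS _ i.*2.+1) e_m o_m e_m1 o_m1.
  rewrite (absdiff_ge (gap i m) (2 ^ m)) ?(absdiff_le (2 ^ m.+1) (gap i m))
          ?(absdiff_ge (gap i m.+1) (2 ^ m.+1)) //; try lia.
  rewrite absdiff_le ?absdiff_ge /=; [split | |]; lia.
Qed.

Lemma interleave_left_edge j : odd j -> left_edge interleave j = 1.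
Proof.
move=> j_odd; rewrite -(odd_double_half j) j_odd add1n.
by rewrite /left_edge (odd_row j./2 0).1.
Qed.

End Interleave.

(* x_m is the base of a square-prime pair, chosen above the bound that the
   growth condition demands from x_(m-1). *)
Fixpoint sp_seq (m : nat) : nat :=
  if m is m'.+1 then sp_base m ((m' + 4) * sp_seq m' + 2 ^ m'.+2) else sp_base 0 0.

Theorem theorem2p1 :
  exists A : nat -> nat,
    (forall n, square_prime (A n)) /\
    (forall n, A n < A n.+1) /\
    (forall j, odd j -> left_edge A j = 1).
Proof.
have growth m : (m + 4) * sp_seq m + 2 ^ m.+2 <= sp_seq m.+1.
  exact: (sp_base_spec _ _).1.
have pairs m : square_prime (sp_seq m) /\ square_prime (sp_seq m + 2 ^ m).
  by case: m => [|m]; exact: (sp_base_spec _ _).2.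
exists (interleave sp_seq); split; [|split].
- move=> n; rewrite /interleave; case: (odd n); [exact: (pairs _).2 | exact: (pairs _).1].
- exact: interleave_incr growth.
- exact: interleave_left_edge growth.
Qed.
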